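(* Let $H$ be the commutative Hopf algebra over $\mathbb{C}$ with linear basis the ladder trees $t_n$, $n\ge 0$ (where $t_0=1_H$ is the unit), with product $t_n\cdot t_m=\frac{(n+m)!}{n!\,m!}\,t_{n+m}$, coproduct $\Delta(t_n)=\sum_{j=0}^n t_j\otimes t_{n-j}$, counit $\bar e(t_n)=\delta_{n,0}$, and antipode $S$. Let $P=\mathrm{id}-E\circ\bar e$ be the projection onto the augmentation ideal (here $E:\mathbb{C}\to H$, $q\mapsto q1_H$). Fix $z\in\mathbb{C}$ and define linear maps $L,Li:H\to\mathbb{C}$ by $L(t_n)=\frac{\ln^n(z)}{n!}$ for $n\ge 0$ and $Li(t_n)=\mathrm{Li}_n(z)$ for $n\ge 1$ (the value $Li(t_0)$ is irrelevant below), where $\mathrm{Li}_n(z)=\sum_{k\ge1}z^k/k^n$ analytically continued. Let $L^{-1}=L\circ S$ and let $m$ denote multiplication in $\mathbb{C}$. For $p\ge 1$ set $$\widetilde a_p(z)=\sum_{j=0}^{p-1}(-1)^j\,\mathrm{Li}_{p-j}(z)\,\frac{\ln^j(z)}{j!}=\mathrm{Li}_p(z)-\mathrm{Li}_{p-1}(z)\ln(z)+\cdots+(-1)^{p-1}\mathrm{Li}_1(z)\frac{\ln^{p-1}(z)}{(p-1)!}.$$ Then for $z\in\mathbb{C}$ (with the same branches of $\ln$ and $\mathrm{Li}_n$ used on both sides), $$\widetilde a_p(z)=m\circ\big(L^{-1}\otimes Li\big)\circ(\mathrm{id}\otimes P)\circ\Delta(t_p).$$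
   Context: $L$ is multiplicative with respect to the product $t_n\cdot t_m=\frac{(n+m)!}{n!m!}t_{n+m}$, i.e. it is a character of $H$. $\mathrm{Li}_n$ denotes the polylogarithm, defined by $\sum_{k\ge1}z^k/k^n$ inside the unit disc and analytically continued with a branch cut along the real axis from $1$ to $+\infty$. *)

From HB Require Import structures.
From mathcomp Require Import all_boot all_order all_algebra.
From mathcomp Require Import reals complex.
Set Implicit Arguments. Unset Strict Implicit. Unset Printing Implicit Defensive.
Import Order.TTheory GRing.Theory Num.Theory.
Local Open Scope ring_scope.

Section LadderHopf.
Variable R : realType.
Local Notation C := R[i].

(* The Hopf algebra H of ladder trees: an element h = \sum_n c_n t_n is stored
   as the finitely supported coefficient sequence (c_n)_n, packaged as a
   {poly C} used ONLY as a container of coordinates (h`_n = coordinate on t_n);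
   the product of H is mulH below, NOT the polynomial product. *)
Definition H := {poly C}.

Definition t (n : nat) : H := 'X^n.

Definition mulH (a b : H) : H :=
  \sum_(i < size a) \sum_(j < size b)
     (a`_i * b`_j * ('C(i + j, i))%:R) *: t (i + j).

Definition counit (h : H) : C := h`_0.

Definition E (q : C) : H := q *: t 0.

Definition Paug (h : H) : H := h - E (counit h).

(* H (x) H : element \sum_(i,j) c_ij t_i (x) t_j stored as x : {poly {poly C}}
   with (x`_i)`_j = c_ij; the i-th coefficient x`_i : H is the right factor
   paired with t_i. *)
Definition HH := {poly {poly C}}.

Definition tt (i j : nat) : HH := (t j)%:P * 'X^i.

Definition Delta (h : H) : HH :=
  \sum_(n < size h) (h`_n)%:P%:P * \sum_(j < n.+1) tt j (n - j).

Definition id_tens_P (x : HH) : HH := \sum_(i < size x) (Paug x`_i)%:P * 'X^i.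

Definition mtens (f g : H -> C) (x : HH) : C :=
  \sum_(i < size x) \sum_(j < size x`_i) (x`_i)`_j * (f (t i) * g (t j)).

Definition linH (v : nat -> C) (h : H) : C := \sum_(n < size h) h`_n * v n.

(* H is connected graded, so the antipode is determined by
   m o (S (x) id) o Delta = E o ebar, i.e. S(t_0) = t_0 and, for n >= 1,
   S(t_n) = - \sum_(j<n) S(t_j) . t_(n-j). *)
Fixpoint Santi_list (n : nat) : seq H :=
  match n with
  | 0 => [:: t 0]
  | n'.+1 =>
      let s := Santi_list n' in
      rcons s (- \sum_(j < n'.+1) mulH (nth 0 s j) (t (n'.+1 - j)))
  end.

Definition Santi_t (n : nat) : H := nth 0 (Santi_list n) n.

Definition Santi (h : H) : H := \sum_(n < size h) h`_n *: Santi_t n.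

Definition Lchar (lnz : C) : H -> C := linH (fun n => lnz ^+ n / (n`!)%:R).

Definition Linv (lnz : C) : H -> C := fun h => Lchar lnz (Santi h).

Definition Lichar (Li : nat -> C -> C) (z : C) : H -> C := linH (fun n => Li n z).

Definition atilde (ln : C -> C) (Li : nat -> C -> C) (p : nat) (z : C) : C :=
  \sum_(j < p) (-1) ^+ j * Li (p - j)%N z * ((ln z) ^+ j / (j`!)%:R).

End LadderHopf.

(* The ladder Hopf algebra is the divided-power Hopf algebra on one generator,
   so its antipode is S(t_n) = (-1)^n t_n: this solves the defining recursion
   S(t_n) = - \sum_(j<n) S(t_j) t_(n-j) because \sum_(j<=n) (-1)^j C(n,j) = 0.
   Hence L^{-1}(t_j) = (-1)^j ln^j(z)/j!.  Since Delta(t_p) = \sum_j t_j (x) t_(p-j)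
   and P kills t_0 but fixes every t_n with n >= 1, applying id (x) P removes
   exactly the term j = p, and m o (L^{-1} (x) Li) turns the remaining terms
   into (-1)^j ln^j(z)/j! Li_(p-j)(z). *)
From HB Require Import structures.
From mathcomp Require Import all_boot all_order all_algebra.
From mathcomp Require Import reals complex.
From mathcomp Require Import ring.
Import Order.TTheory GRing.Theory Num.Theory.
Local Open Scope ring_scope.

Lemma big_ord_widen0 (V : nmodType) n N (F : nat -> V) : (n <= N)%N ->
  (forall i, (n <= i)%N -> F i = 0) -> \sum_(i < n) F i = \sum_(i < N) F i.
Proof.
move=> le_nN F0; rewrite (big_ord_widen N F le_nN) big_mkcond /=.
by apply: eq_bigr => i _; case: ltnP => // /F0.
Qed.

Lemma sum_alt_binom (K : pzRingType) n :
  \sum_(i < n.+1) (-1) ^+ i * ('C(n.+1, i))%:R = - (-1) ^+ n.+1 :> K.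
Proof.
have := exprD1n (-1 : K) n.+1.
rewrite addNr expr0n /= big_ord_recr /= binn mulr1n => /eqP.
rewrite eq_sym addr_eq0 => /eqP <-.
by apply: eq_bigr => i _; rewrite mulr_natr.
Qed.

Section LadderHopf.
Variable R : realType.
Local Notation C := R[i].
Local Notation t := (t R).

Lemma size_t n : size (t n) = n.+1.
Proof. exact: size_polyXn. Qed.

Lemma coef_t n i : (t n)`_i = (i == n)%:R.
Proof. exact: coefXn. Qed.

Lemma big_coef_scale_t (V : nmodType) (F : nat -> C -> V) (c : C) n :
  (forall i, F i 0 = 0) ->
  \sum_(i < size (c *: t n)) F i (c *: t n)`_i = F n c.
Proof.
move=> F0; have coefZt i : (c *: t n)`_i = c * (i == n)%:R by rewrite coefZ coef_t.
rewrite (@big_ord_widen0 _ _ n.+1 (fun i => F i (c *: t n)`_i)) => [||i lt_ni].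
- rewrite (bigD1 ord_max) //= big1 ?addr0; first by rewrite coefZt eqxx mulr1.
  by move=> i; rewrite -val_eqE => /negbTE ne_in; rewrite coefZt ne_in mulr0 F0.
- by rewrite -(size_t n) size_scale_leq.
- by rewrite nth_default.
Qed.

Lemma big_coef_t (V : nmodType) (F : nat -> C -> V) n :
  (forall i, F i 0 = 0) -> \sum_(i < size (t n)) F i (t n)`_i = F n 1.
Proof. by rewrite -[t n]scale1r; apply: big_coef_scale_t. Qed.

Lemma linH0 (v : nat -> C) : linH v 0 = 0.
Proof. by rewrite /linH size_poly0 big_ord0. Qed.

Lemma linH_scale_t (v : nat -> C) c n : linH v (c *: t n) = c * v n.
Proof.
by rewrite /linH; apply: (big_coef_scale_t _ (fun i x => x * v i)) => i; rewrite mul0r.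
Qed.

Lemma linH_t (v : nat -> C) n : linH v (t n) = v n.
Proof. by rewrite -[t n]scale1r linH_scale_t mul1r. Qed.

Lemma mulH_scale_t (c : C) a b :
  mulH (c *: t a) (t b) = (c * ('C(a + b, a))%:R) *: t (a + b).
Proof.
rewrite /mulH (big_coef_scale_t _ (fun i x => \sum_(j < size (t b))
  (x * (t b)`_j * ('C(i + j, i))%:R) *: t (i + j))) => [|i]; last first.
  by apply: big1 => j _; rewrite !mul0r scale0r.
rewrite (big_coef_t _ (fun j y => (c * y * ('C(a + j, a))%:R) *: t (a + j))) => [|j].
  by rewrite (mulr1 c).
by rewrite (mulr0 c) mul0r scale0r.
Qed.

Lemma Santi_list_nth n j :
  (j <= n)%N -> nth 0 (Santi_list R n) j = (-1) ^+ j *: t j.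
Proof.
have size_Santi_list m : size (Santi_list R m) = m.+1.
  by elim: m => //= m IHm; rewrite size_rcons IHm.
elim: n j => [|n IHn] j; first by rewrite leqn0 => /eqP -> /=; rewrite scale1r.
rewrite leq_eqVlt ltnS /= nth_rcons size_Santi_list.
case/predU1P => [->|le_jn]; last by rewrite ltnS le_jn IHn.
rewrite ltnn eqxx (eq_bigr (fun i : 'I_n.+1 =>
  ((-1) ^+ i * ('C(n.+1, i))%:R) *: t n.+1)) => [|i _]; last first.
  have le_in : (i <= n)%N by rewrite -ltnS.
  by rewrite IHn // mulH_scale_t subnKC ?leqW.
by rewrite -scaler_suml sum_alt_binom scaleNr opprK.
Qed.

Lemma Santi_t n : Santi (t n) = (-1) ^+ n *: t n.
Proof.
rewrite /Santi (big_coef_t _ (fun i x => x *: Santi_t R i)) => [|i].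
  by rewrite scale1r /Santi_t Santi_list_nth.
by rewrite scale0r.
Qed.

Lemma Paug_t0 : Paug (t 0) = 0.
Proof. by rewrite /Paug /E /counit coef_t scale1r subrr. Qed.

Lemma Paug_t n : (0 < n)%N -> Paug (t n) = t n.
Proof.
by move=> n_gt0; rewrite /Paug /E /counit coef_t eq_sym gtn_eqF // scale0r subr0.
Qed.

Lemma Delta_t p : Delta (t p) = \poly_(i < p.+1) t (p - i).
Proof.
rewrite /Delta (big_coef_t _ (fun i x => x%:P%:P * \sum_(j < i.+1) tt R j (i - j))) => [|i];
  last by rewrite !mul0r.
by rewrite mul1r poly_def; apply: eq_bigr => i _; rewrite /tt mul_polyC.
Qed.

Lemma id_tens_P_poly n (f : nat -> H R) :
  id_tens_P (\poly_(i < n) f i) = \poly_(i < n) Paug (f i).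
Proof.
have Paug0 : Paug (0 : H R) = 0 by rewrite /Paug /E /counit coef0 scale0r subr0.
rewrite /id_tens_P (@big_ord_widen0 _ _ n
  (fun i => (Paug (\poly_(i < n) f i)`_i)%:P * 'X^i)) ?size_poly // => [|i le_ni].
  by rewrite [RHS]poly_def; apply: eq_bigr => i _; rewrite coef_poly ltn_ord mul_polyC.
by rewrite nth_default ?Paug0 ?mul0r // (leq_trans (size_poly _ _)).
Qed.

Lemma mtens_poly (f g : H R -> C) n (h : nat -> H R) :
  mtens f g (\poly_(i < n) h i) = \sum_(i < n) f (t i) * linH (g \o t) (h i).
Proof.
rewrite /mtens (@big_ord_widen0 _ _ n (fun i => \sum_(j < size (\poly_(i < n) h i)`_i)
  (\poly_(i < n) h i)`_i`_j * (f (t i) * g (t j)))) ?size_poly // => [|i le_ni].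
  apply: eq_bigr => i _; rewrite coef_poly ltn_ord /linH mulr_sumr.
  by apply: eq_bigr => j _; rewrite mulrCA.
by rewrite nth_default ?size_poly0 ?big_ord0 // (leq_trans (size_poly _ _)).
Qed.

End LadderHopf.

Theorem mainTheorem1 (R : realType) (ln : R[i] -> R[i]) (Li : nat -> R[i] -> R[i])
    (p : nat) (z : R[i]) :
  (0 < p)%N ->
  atilde ln Li p z =
  mtens (Linv (ln z)) (Lichar Li z) (id_tens_P (Delta (t R p))).
Proof.
move=> p_gt0; rewrite Delta_t id_tens_P_poly mtens_poly big_ord_recr /=.
rewrite subnn Paug_t0 linH0 mulr0 addr0.
apply: eq_bigr => j _; rewrite Paug_t ?subn_gt0 // linH_t /Linv Santi_t.
by rewrite /Lchar /Lichar /= linH_scale_t linH_t; ring.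
Qed.
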